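(* Let $$\begin{array}{ccc}\mathcal A&\xrightarrow{F}&\mathcal B\\ {\scriptstyle H}\downarrow&&\downarrow{\scriptstyle K}\\ \mathcal C&\xrightarrow{G}&\mathcal D\end{array}$$ be a commuting square of (possibly large) $\mathcal V$-categories and $\mathcal V$-functors, with $G$ fully faithful and $H,K$ discrete isofibrations. Then the square is a pullback in $\mathcal V\text{-}\mathbf{CAT}$ if and only if: (1) $F$ is fully faithful; and (2) an object $b\in\mathcal B$ is in the essential image of $F$ if and only if $Kb$ is in the essential image of $G$.
   Context: $\mathcal V$ is a symmetric monoidal closed category and $\mathcal V\text{-}\mathbf{CAT}$ is the (ordinary) category of $\mathcal V$-categories and $\mathcal V$-functors; pullback means strict pullback there. A $\mathcal V$-functor $U\colon\mathcal D\to\mathcal C$ is a discrete isofibration if for each object $d\in\mathcal D$ and each isomorphism $f\colon c\cong Ud$ in $\mathcal C$ there is a unique isomorphism $f'\colon c'\cong d$ in $\mathcal D$ with $Uf'=f$. *)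

(* Ordinary categories (hom-types with Leibniz equality of morphisms) *)
Record Cat : Type := {
  ob :> Type;
  hom : ob -> ob -> Type;
  idm : forall a, hom a a;
  cmp : forall a b c, hom b c -> hom a b -> hom a c;
  cmp_idl : forall a b (f : hom a b), cmp a b b (idm b) f = f;
  cmp_idr : forall a b (f : hom a b), cmp a a b f (idm a) = f;
  cmp_assoc : forall a b c d (h : hom c d) (g : hom b c) (f : hom a b),
    cmp a c d h (cmp a b c g f) = cmp a b d (cmp b c d h g) f
}.
Arguments hom {_} a b.
Arguments idm {_} a.
Arguments cmp {_ a b c} g f.
Arguments cmp_idl {_ a b} f.
Arguments cmp_idr {_ a b} f.
Arguments cmp_assoc {_ a b c d} h g f.

Notation "g ⊙ f" := (cmp g f) (at level 40, left associativity).

Definition is_iso {C : Cat} {a b : C} (f : hom a b) : Prop :=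
  exists g : hom b a, g ⊙ f = idm a /\ f ⊙ g = idm b.

Record SMCData (C : Cat) := {
  ten : C -> C -> C;
  tenm : forall a a' b b', hom a a' -> hom b b' -> hom (ten a b) (ten a' b');
  uI : C;
  asc : forall a b c, hom (ten (ten a b) c) (ten a (ten b c));
  asc_inv : forall a b c, hom (ten a (ten b c)) (ten (ten a b) c);
  lu : forall a, hom (ten uI a) a;
  lu_inv : forall a, hom a (ten uI a);
  ru : forall a, hom (ten a uI) a;
  ru_inv : forall a, hom a (ten a uI);
  sym : forall a b, hom (ten a b) (ten b a);
  ihom : C -> C -> C;
  ev : forall b c, hom (ten (ihom b c) b) c
}.
Arguments ten {C} _ a b.
Arguments tenm {C} _ {a a' b b'} f g.
Arguments uI {C} _.
Arguments asc {C} _ a b c.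
Arguments asc_inv {C} _ a b c.
Arguments lu {C} _ a.
Arguments lu_inv {C} _ a.
Arguments ru {C} _ a.
Arguments ru_inv {C} _ a.
Arguments sym {C} _ a b.
Arguments ihom {C} _ b c.
Arguments ev {C} _ b c.

Record SMCLaws (C : Cat) (M : SMCData C) : Prop := {
  tenm_id : forall a b, tenm M (idm a) (idm b) = idm (ten M a b);
  tenm_cmp : forall a a' a'' b b' b'' (f : hom a a') (f' : hom a' a'')
      (g : hom b b') (g' : hom b' b''),
    tenm M (f' ⊙ f) (g' ⊙ g) = tenm M f' g' ⊙ tenm M f g;
  asc_iso1 : forall a b c, asc_inv M a b c ⊙ asc M a b c = idm _;
  asc_iso2 : forall a b c, asc M a b c ⊙ asc_inv M a b c = idm _;
  asc_nat : forall a a' b b' c c' (f : hom a a') (g : hom b b') (h : hom c c'),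
    asc M a' b' c' ⊙ tenm M (tenm M f g) h = tenm M f (tenm M g h) ⊙ asc M a b c;
  lu_iso1 : forall a, lu_inv M a ⊙ lu M a = idm _;
  lu_iso2 : forall a, lu M a ⊙ lu_inv M a = idm _;
  lu_nat : forall a a' (f : hom a a'),
    lu M a' ⊙ tenm M (idm (uI M)) f = f ⊙ lu M a;
  ru_iso1 : forall a, ru_inv M a ⊙ ru M a = idm _;
  ru_iso2 : forall a, ru M a ⊙ ru_inv M a = idm _;
  ru_nat : forall a a' (f : hom a a'),
    ru M a' ⊙ tenm M f (idm (uI M)) = f ⊙ ru M a;
  pentagon : forall a b c d,
    asc M a b (ten M c d) ⊙ asc M (ten M a b) c d
    = tenm M (idm a) (asc M b c d) ⊙
        (asc M a (ten M b c) d ⊙ tenm M (asc M a b c) (idm d));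
  triangle : forall a b,
    tenm M (idm a) (lu M b) ⊙ asc M a (uI M) b = tenm M (ru M a) (idm b);
  sym_nat : forall a a' b b' (f : hom a a') (g : hom b b'),
    sym M a' b' ⊙ tenm M f g = tenm M g f ⊙ sym M a b;
  sym_invol : forall a b, sym M b a ⊙ sym M a b = idm (ten M a b);
  hexagon : forall a b c,
    asc M b c a ⊙ (sym M a (ten M b c) ⊙ asc M a b c)
    = tenm M (idm b) (sym M a c) ⊙ (asc M b a c ⊙ tenm M (sym M a b) (idm c));
  (* closedness: (- ⊗ b) has right adjoint [b, -] with counit ev *)
  closed : forall a b c (f : hom (ten M a b) c),
    exists! g : hom a (ihom M b c), ev M b c ⊙ tenm M g (idm b) = f
}.
Arguments tenm_cmp {C M} _ {a a' a'' b b' b''} f f' g g'.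

Record SMCC := { Vc : Cat; Vm : SMCData Vc; Vl : SMCLaws Vc Vm }.

Record VCat (V : SMCC) := {
  vobj :> Type;
  vhom : vobj -> vobj -> ob (Vc V);
  vcomp : forall x y z, hom (ten (Vm V) (vhom y z) (vhom x y)) (vhom x z);
  vunit : forall x, hom (uI (Vm V)) (vhom x x);
  vassoc : forall x y z w,
    vcomp x y w ⊙ tenm (Vm V) (vcomp y z w) (idm (vhom x y))
    = vcomp x z w ⊙ (tenm (Vm V) (idm (vhom z w)) (vcomp x y z)
                      ⊙ asc (Vm V) (vhom z w) (vhom y z) (vhom x y));
  vunit_l : forall x y,
    vcomp x y y ⊙ tenm (Vm V) (vunit y) (idm (vhom x y)) = lu (Vm V) (vhom x y);
  vunit_r : forall x y,
    vcomp x x y ⊙ tenm (Vm V) (idm (vhom x y)) (vunit x) = ru (Vm V) (vhom x y)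
}.
Arguments vobj {V} _.
Arguments vhom {V} _ x y.
Arguments vcomp {V} _ x y z.
Arguments vunit {V} _ x.

Record VFunctor (V : SMCC) (A B : VCat V) := {
  fobj :> A -> B;
  fhom : forall x y, hom (vhom A x y) (vhom B (fobj x) (fobj y));
  fcomp : forall x y z,
    fhom x z ⊙ vcomp A x y z
    = vcomp B (fobj x) (fobj y) (fobj z) ⊙ tenm (Vm V) (fhom y z) (fhom x y);
  funit : forall x, fhom x x ⊙ vunit A x = vunit B (fobj x)
}.
Arguments VFunctor {V} A B.
Arguments fobj {V A B} _ _.
Arguments fhom {V A B} _ x y.
Arguments fcomp {V A B} _ x y z.
Arguments funit {V A B} _ x.

Lemma vfcomp_comp {V : SMCC} {A B C : VCat V} (G : VFunctor B C) (F : VFunctor A B)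
  (x y z : A) :
  (fhom G (F x) (F z) ⊙ fhom F x z) ⊙ vcomp A x y z
  = vcomp C (G (F x)) (G (F y)) (G (F z))
      ⊙ tenm (Vm V) (fhom G (F y) (F z) ⊙ fhom F y z) (fhom G (F x) (F y) ⊙ fhom F x y).
Proof.
  rewrite <- cmp_assoc, (fcomp F), cmp_assoc, (fcomp G), <- cmp_assoc.
  rewrite (tenm_cmp (Vl V)). reflexivity.
Qed.

Lemma vfcomp_unit {V : SMCC} {A B C : VCat V} (G : VFunctor B C) (F : VFunctor A B)
  (x : A) :
  (fhom G (F x) (F x) ⊙ fhom F x x) ⊙ vunit A x = vunit C (G (F x)).
Proof.
  rewrite <- cmp_assoc, (funit F), (funit G). reflexivity.
Qed.

Definition vfcomp {V : SMCC} {A B C : VCat V} (G : VFunctor B C) (F : VFunctor A B)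
  : VFunctor A C :=
  {| fobj := fun x => G (F x);
     fhom := fun x y => fhom G (F x) (F y) ⊙ fhom F x y;
     fcomp := vfcomp_comp G F;
     funit := vfcomp_unit G F |}.

Definition uhom {V : SMCC} (A : VCat V) (x y : A) : Type :=
  hom (uI (Vm V)) (vhom A x y).

Definition ucomp {V : SMCC} {A : VCat V} {x y z : A}
  (g : uhom A y z) (f : uhom A x y) : uhom A x z :=
  vcomp A x y z ⊙ (tenm (Vm V) g f ⊙ lu_inv (Vm V) (uI (Vm V))).

Definition uid {V : SMCC} (A : VCat V) (x : A) : uhom A x x := vunit A x.

Definition is_uiso {V : SMCC} {A : VCat V} {x y : A} (f : uhom A x y) : Prop :=
  exists g : uhom A y x, ucomp g f = uid A x /\ ucomp f g = uid A y.

Definition ufmap {V : SMCC} {A B : VCat V} (F : VFunctor A B) {x y : A}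
  (f : uhom A x y) : uhom B (F x) (F y) := fhom F x y ⊙ f.

Definition fully_faithful {V : SMCC} {A B : VCat V} (F : VFunctor A B) : Prop :=
  forall x y : A, is_iso (fhom F x y).

Definition ess_image {V : SMCC} {A B : VCat V} (F : VFunctor A B) (b : B) : Prop :=
  exists (a : A) (f : uhom B (F a) b), is_uiso f.

(* discrete isofibration U : D -> C: for every d and iso f : c ≅ U d there is a
   unique iso f' : c' ≅ d with U f' = f (equality of the pairs (U c', U f')
   and (c, f) as dependent pairs). *)
Definition discrete_isofibration {V : SMCC} {D C : VCat V} (U : VFunctor D C) : Prop :=
  forall (d : D) (c : C) (f : uhom C c (U d)), is_uiso f ->
    exists (c' : D) (f' : uhom D c' d),
      is_uiso f' /\
      existT (fun c0 : C => uhom C c0 (U d)) (U c') (ufmap U f') =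
      existT (fun c0 : C => uhom C c0 (U d)) c f /\
      forall (c'' : D) (f'' : uhom D c'' d),
        is_uiso f'' ->
        existT (fun c0 : C => uhom C c0 (U d)) (U c'') (ufmap U f'') =
        existT (fun c0 : C => uhom C c0 (U d)) c f ->
        existT (fun d0 : D => uhom D d0 d) c' f' =
        existT (fun d0 : D => uhom D d0 d) c'' f''.

(* strict pullback in V-CAT of the (commuting) square
       A --F--> B
       H|       |K
       C --G--> D                                                       *)
Definition is_pullback {V : SMCC} {A B C D : VCat V}
  (F : VFunctor A B) (H : VFunctor A C) (K : VFunctor B D) (G : VFunctor C D) : Prop :=
  forall (X : VCat V) (P : VFunctor X B) (Q : VFunctor X C),
    vfcomp K P = vfcomp G Q ->
    exists! U : VFunctor X A, vfcomp F U = P /\ vfcomp H U = Q.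

(* (=>) Let P be the explicit pullback: objects are pairs (b, c) with K b = G c,
   hom-objects are those of B.  The factorization P -> A through the given
   pullback is inverse to the comparison A -> P, whose hom-maps are those of F;
   hence F is fully faithful.  Lifting an iso G c ≅ K b along K gives an
   object (b', c) of P, whose image in A is sent by F to b' ≅ b.
   (<=) For a cone (P, Q), each P x is in the essential image of F; lifting
   along H and then along K moves a preimage to an a with F a = P x and
   H a = Q x.  Such an a is unique: the identity F a1 = F a2 comes from an iso
   a1 ≅ a2 lying over an identity of C, and H admits only one such lift.  Full
   faithfulness of F and G then determines the factorization on hom-objects. *)

From Stdlib Require Import ProofIrrelevance FunctionalExtensionality IndefiniteDescription.

(* A morphism into a hom-object, packed with its endpoints, so that morphisms
   between propositionally (not definitionally) equal objects can be compared. *)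
Definition arrows {V : SMCC} (A : VCat V) (S : ob (Vc V)) : Type :=
  {xy : vobj A * vobj A & hom S (vhom A (fst xy) (snd xy))}.

Definition arrow {V : SMCC} {A : VCat V} {S : ob (Vc V)} (x y : A)
  (m : hom S (vhom A x y)) : arrows A S :=
  existT (fun xy : vobj A * vobj A => hom S (vhom A (fst xy) (snd xy))) (x, y) m.

Definition fhom_arrow {V : SMCC} {A B : VCat V} (M : VFunctor A B) (x y : A)
  : arrows B (vhom A x y) :=
  arrow (M x) (M y) (fhom M x y).

Definition map_arrow {V : SMCC} {A B : VCat V} {S} (M : VFunctor A B)
  (s : arrows A S) : arrows B S :=
  let (xy, m) := s in arrow (M (fst xy)) (M (snd xy)) (fhom M (fst xy) (snd xy) ⊙ m).

Section Arrows.
Context {V : SMCC} {A : VCat V} {S : ob (Vc V)}.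

Lemma arrow_endpoints {x y x' y' : A} {u : hom S (vhom A x y)} {v : hom S (vhom A x' y')} :
  arrow x y u = arrow x' y' v -> x = x' /\ y = y'.
Proof. intro E. apply (f_equal (@projT1 _ _)) in E. injection E. auto. Qed.

Lemma arrow_inj {x y : A} {u v : hom S (vhom A x y)} : arrow x y u = arrow x y v -> u = v.
Proof. apply inj_pair2. Qed.

End Arrows.

Lemma arrow_vunit {V : SMCC} {A : VCat V} (x y : A) :
  x = y -> arrow x x (vunit A x) = arrow y y (vunit A y).
Proof. intros <-. reflexivity. Qed.

Lemma slice_eq_arrow {V : SMCC} {A : VCat V} (z x y : A) (f : uhom A x z) (g : uhom A y z) :
  existT (fun c : A => uhom A c z) x f = existT (fun c : A => uhom A c z) y g <->
  arrow x z f = arrow y z g.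
Proof.
  split; intro E.
  - assert (x = y) by exact (f_equal (@projT1 _ _) E). subst y.
    apply inj_pair2 in E. subst g. reflexivity.
  - destruct (arrow_endpoints E) as [<- _].
    apply arrow_inj in E. subst g. reflexivity.
Qed.

Lemma map_arrow_vfcomp {V : SMCC} {A B C : VCat V} {S} (K : VFunctor B C) (F : VFunctor A B)
  (s : arrows A S) :
  map_arrow (vfcomp K F) s = map_arrow K (map_arrow F s).
Proof. destruct s as [[x y] m]. simpl. rewrite cmp_assoc. reflexivity. Qed.

Lemma fhom_arrow_congr {V : SMCC} {A B : VCat V} (M N : VFunctor A B) (x y : A) :
  M = N -> fhom_arrow M x y = fhom_arrow N x y.
Proof. intros <-. reflexivity. Qed.

Lemma vfunctor_ext {V : SMCC} {A B : VCat V} (M N : VFunctor A B) :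
  (forall x y, fhom_arrow M x y = fhom_arrow N x y) -> M = N.
Proof.
  destruct M as [Mo Mh Mc Mu], N as [No Nh Nc Nu]; unfold fhom_arrow; simpl; intro Eh.
  assert (Mo = No).
  { apply functional_extensionality; intro x. exact (proj1 (arrow_endpoints (Eh x x))). }
  subst No.
  assert (Mh = Nh).
  { do 2 (apply functional_extensionality_dep; intro). apply arrow_inj, Eh. }
  subst Nh. f_equal; apply proof_irrelevance.
Qed.

Definition vcast {V : SMCC} {A : VCat V} {x y x' y' : A} (e1 : x = x') (e2 : y = y')
  : hom (vhom A x y) (vhom A x' y') :=
  match e1 in _ = x1, e2 in _ = y1 return hom (vhom A x y) (vhom A x1 y1) with
  | eq_refl, eq_refl => idm _
  end.

Lemma arrow_vcast {V : SMCC} {A : VCat V} {S} (x y x' y' : A) (e1 : x = x') (e2 : y = y')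
  (m : hom S (vhom A x y)) :
  arrow x' y' (vcast e1 e2 ⊙ m) = arrow x y m.
Proof. destruct e1, e2. simpl. rewrite cmp_idl. reflexivity. Qed.

Lemma vcast_vcomp {V : SMCC} {A : VCat V} (x y z x' y' z' : A)
  (e1 : x = x') (e2 : y = y') (e3 : z = z') :
  vcast e1 e3 ⊙ vcomp A x y z = vcomp A x' y' z' ⊙ tenm (Vm V) (vcast e2 e3) (vcast e1 e2).
Proof.
  destruct e1, e2, e3. simpl. rewrite (tenm_id _ _ (Vl V)), cmp_idl, cmp_idr. reflexivity.
Qed.

Lemma vcast_vunit {V : SMCC} {A : VCat V} (x x' : A) (e : x = x') :
  vcast e e ⊙ vunit A x = vunit A x'.
Proof. destruct e. apply cmp_idl. Qed.

Lemma iso_monic {W : Cat} {a b : W} (f : hom a b) :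
  is_iso f -> forall c (u v : hom c a), f ⊙ u = f ⊙ v -> u = v.
Proof.
  intros [g [Hgf _]] c u v E.
  rewrite <- (cmp_idl u), <- (cmp_idl v), <- Hgf, <- !cmp_assoc, E. reflexivity.
Qed.

Section FullyFaithful.
Context {V : SMCC} {A B : VCat V} (M : VFunctor A B) (HM : fully_faithful M).

Definition ff_inv (x y : A) : hom (vhom B (M x) (M y)) (vhom A x y) :=
  proj1_sig (constructive_indefinite_description _ (HM x y)).

Lemma fhom_ff_inv (x y : A) {S} (m : hom S (vhom B (M x) (M y))) :
  fhom M x y ⊙ (ff_inv x y ⊙ m) = m.
Proof.
  unfold ff_inv. rewrite cmp_assoc, (proj2 (proj2_sig (constructive_indefinite_description _ (HM x y)))).
  apply cmp_idl.
Qed.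

Lemma ff_arrow_inj {S} (a b a' b' : A) (m1 : hom S (vhom A a b)) (m2 : hom S (vhom A a' b')) :
  a = a' -> b = b' ->
  arrow (M a) (M b) (fhom M a b ⊙ m1) = arrow (M a') (M b') (fhom M a' b' ⊙ m2) ->
  arrow a b m1 = arrow a' b' m2.
Proof.
  intros <- <- E. apply arrow_inj in E. apply (iso_monic _ (HM a b)) in E. subst m2. reflexivity.
Qed.

Lemma ff_arrow_full {S} (x1 x2 : A) (y1 y2 : B) (g : hom S (vhom B y1 y2)) :
  y1 = M x1 -> y2 = M x2 ->
  exists m : hom S (vhom A x1 x2), arrow y1 y2 g = arrow (M x1) (M x2) (fhom M x1 x2 ⊙ m).
Proof. intros -> ->. exists (ff_inv x1 x2 ⊙ g). rewrite fhom_ff_inv. reflexivity. Qed.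

End FullyFaithful.

Lemma ufmap_ucomp {V : SMCC} {A B : VCat V} (M : VFunctor A B) (x y z : A)
  (g : uhom A y z) (f : uhom A x y) :
  ufmap M (ucomp g f) = ucomp (ufmap M g) (ufmap M f).
Proof.
  unfold ufmap, ucomp. rewrite (tenm_cmp (Vl V)), !cmp_assoc, (fcomp M). reflexivity.
Qed.

Lemma ufmap_uid {V : SMCC} {A B : VCat V} (M : VFunctor A B) (x : A) :
  ufmap M (uid A x) = uid B (M x).
Proof. apply funit. Qed.

Lemma uid_is_uiso {V : SMCC} (A : VCat V) (x : A) : is_uiso (uid A x).
Proof.
  assert (Hu : ucomp (uid A x) (uid A x) = uid A x).
  { unfold ucomp, uid.
    replace (tenm (Vm V) (vunit A x) (vunit A x))
      with (tenm (Vm V) (vunit A x) (idm _) ⊙ tenm (Vm V) (idm _) (vunit A x))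
      by (rewrite <- (tenm_cmp (Vl V)), cmp_idr, cmp_idl; reflexivity).
    rewrite !cmp_assoc, (vunit_l _ A), (lu_nat _ _ (Vl V)), <- cmp_assoc, (lu_iso2 _ _ (Vl V)).
    apply cmp_idr. }
  exists (uid A x). auto.
Qed.

Lemma ufmap_is_uiso {V : SMCC} {A B : VCat V} (M : VFunctor A B) {x y : A} (f : uhom A x y) :
  is_uiso f -> is_uiso (ufmap M f).
Proof.
  intros [g [Hgf Hfg]]. exists (ufmap M g).
  rewrite <- !ufmap_ucomp, Hgf, Hfg, !ufmap_uid. auto.
Qed.

Lemma ff_reflects_uiso {V : SMCC} {A B : VCat V} (M : VFunctor A B) (HM : fully_faithful M)
  {x y : A} (f : uhom A x y) :
  is_uiso (ufmap M f) -> is_uiso f.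
Proof.
  intros [g [Hgf Hfg]].
  set (g' := ff_inv M HM y x ⊙ g).
  assert (Hg' : ufmap M g' = g) by (unfold ufmap, g'; apply fhom_ff_inv).
  exists g'. split.
  - apply (iso_monic _ (HM x x)). change (ufmap M (ucomp g' f) = ufmap M (uid A x)).
    rewrite ufmap_ucomp, ufmap_uid, Hg'. exact Hgf.
  - apply (iso_monic _ (HM y y)). change (ufmap M (ucomp f g') = ufmap M (uid A y)).
    rewrite ufmap_ucomp, ufmap_uid, Hg'. exact Hfg.
Qed.

Lemma arrow_is_uiso {V : SMCC} {A : VCat V} {x y x' y' : A} {f : uhom A x y} {g : uhom A x' y'} :
  arrow x y f = arrow x' y' g -> is_uiso f -> is_uiso g.
Proof.
  intro E. destruct (arrow_endpoints E) as [<- <-].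
  apply arrow_inj in E. subst g. auto.
Qed.

Lemma disc_isofib_lift_unique {V : SMCC} {D C : VCat V} (U : VFunctor D C)
  (HU : discrete_isofibration U) (d c1 c2 : D) (f1 : uhom D c1 d) (f2 : uhom D c2 d) :
  is_uiso f1 -> is_uiso f2 ->
  arrow (U c1) (U d) (ufmap U f1) = arrow (U c2) (U d) (ufmap U f2) ->
  arrow c1 d f1 = arrow c2 d f2.
Proof.
  intros Hf1 Hf2 E. apply slice_eq_arrow in E.
  destruct (HU d (U c2) (ufmap U f2) (ufmap_is_uiso U f2 Hf2)) as [c' [f' [_ [_ Huniq]]]].
  apply slice_eq_arrow. rewrite <- (Huniq c1 f1 Hf1 E). exact (Huniq c2 f2 Hf2 eq_refl).
Qed.

Lemma ess_image_obj {V : SMCC} {A B : VCat V} (F : VFunctor A B) (a : A) : ess_image F (F a).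
Proof. exists a, (uid B (F a)). apply uid_is_uiso. Qed.

Lemma ess_image_map {V : SMCC} {A B D : VCat V} (F : VFunctor A B) (K : VFunctor B D) (b : B) :
  ess_image F b -> ess_image (vfcomp K F) (K b).
Proof. intros [a [f Hf]]. exists a, (ufmap K f). exact (ufmap_is_uiso K f Hf). Qed.

Lemma ess_image_vfcomp {V : SMCC} {A C D : VCat V} (G : VFunctor C D) (H : VFunctor A C) (d : D) :
  ess_image (vfcomp G H) d -> ess_image G d.
Proof. intros [a [f Hf]]. exists (H a), f. exact Hf. Qed.

Lemma idm_vcomp {V : SMCC} (A : VCat V) (x y z : A) :
  idm _ ⊙ vcomp A x y z = vcomp A x y z ⊙ tenm (Vm V) (idm (vhom A y z)) (idm (vhom A x y)).
Proof. rewrite (tenm_id _ _ (Vl V)), cmp_idl, cmp_idr. reflexivity. Qed.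

Definition vfid {V : SMCC} (A : VCat V) : VFunctor A A :=
  {| fobj := fun x => x;
     fhom := fun x y => idm _;
     fcomp := idm_vcomp A;
     funit := fun x => cmp_idl _ |}.

Lemma vfcomp_id {V : SMCC} {A B : VCat V} (F : VFunctor A B) : vfcomp F (vfid A) = F.
Proof. apply vfunctor_ext. intros x y. unfold fhom_arrow. simpl. rewrite cmp_idr. reflexivity. Qed.

Lemma vfcompA {V : SMCC} {A B C D : VCat V} (F : VFunctor C D) (U : VFunctor B C)
  (W : VFunctor A B) :
  vfcomp F (vfcomp U W) = vfcomp (vfcomp F U) W.
Proof. apply vfunctor_ext. intros x y. unfold fhom_arrow. simpl. rewrite cmp_assoc. reflexivity. Qed.

Section FFLift.
Context {V : SMCC} {X A B : VCat V} (M : VFunctor A B) (HM : fully_faithful M)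
  (P : VFunctor X B) (Uo : X -> A) (e : forall x, P x = M (Uo x)).

Definition ff_lift_hom (x y : X) : hom (vhom X x y) (vhom A (Uo x) (Uo y)) :=
  ff_inv M HM (Uo x) (Uo y) ⊙ (vcast (e x) (e y) ⊙ fhom P x y).

Lemma ff_lift_comp (x y z : X) :
  ff_lift_hom x z ⊙ vcomp X x y z
  = vcomp A (Uo x) (Uo y) (Uo z) ⊙ tenm (Vm V) (ff_lift_hom y z) (ff_lift_hom x y).
Proof.
  apply (iso_monic _ (HM (Uo x) (Uo z))). unfold ff_lift_hom.
  rewrite cmp_assoc, fhom_ff_inv, <- cmp_assoc, (fcomp P), cmp_assoc,
    (vcast_vcomp _ _ _ _ _ _ (e x) (e y) (e z)), <- cmp_assoc, <- (tenm_cmp (Vl V)).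
  rewrite cmp_assoc, (fcomp M), <- cmp_assoc, <- (tenm_cmp (Vl V)), !fhom_ff_inv.
  reflexivity.
Qed.

Lemma ff_lift_unit (x : X) : ff_lift_hom x x ⊙ vunit X x = vunit A (Uo x).
Proof.
  apply (iso_monic _ (HM (Uo x) (Uo x))). unfold ff_lift_hom.
  rewrite cmp_assoc, fhom_ff_inv, <- cmp_assoc, (funit P), vcast_vunit, (funit M).
  reflexivity.
Qed.

Definition ff_lift : VFunctor X A :=
  {| fobj := Uo; fhom := ff_lift_hom; fcomp := ff_lift_comp; funit := ff_lift_unit |}.

Lemma vfcomp_ff_lift : vfcomp M ff_lift = P.
Proof.
  apply vfunctor_ext. intros x y. unfold fhom_arrow. simpl. unfold ff_lift_hom.
  rewrite fhom_ff_inv. apply arrow_vcast.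
Qed.

End FFLift.

Section CanonicalPullback.
Context {V : SMCC} {B C D : VCat V} (K : VFunctor B D) (G : VFunctor C D).

Definition pb_obj : Type := {bc : vobj B * vobj C | K (fst bc) = G (snd bc)}.

Definition pb_b (p : pb_obj) : B := fst (proj1_sig p).
Definition pb_c (p : pb_obj) : C := snd (proj1_sig p).

(* Because [G] will be fully faithful, the hom-objects of the pullback can be
   taken to be those of [B]; the [C]-component is recovered by [pb_snd]. *)
Definition Pullback : VCat V :=
  {| vobj := pb_obj;
     vhom := fun p q => vhom B (pb_b p) (pb_b q);
     vcomp := fun p q r => vcomp B (pb_b p) (pb_b q) (pb_b r);
     vunit := fun p => vunit B (pb_b p);
     vassoc := fun p q r s => vassoc _ B (pb_b p) (pb_b q) (pb_b r) (pb_b s);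
     vunit_l := fun p q => vunit_l _ B (pb_b p) (pb_b q);
     vunit_r := fun p q => vunit_r _ B (pb_b p) (pb_b q) |}.

Definition pb_fst : VFunctor Pullback B :=
  @Build_VFunctor V Pullback B pb_b (fun p q => idm _)
    (fun p q r => idm_vcomp B (pb_b p) (pb_b q) (pb_b r)) (fun p => cmp_idl _).

Definition pb_snd (HG : fully_faithful G) : VFunctor Pullback C :=
  ff_lift G HG (vfcomp K pb_fst) pb_c (fun p => proj2_sig p).

Lemma pb_square (HG : fully_faithful G) : vfcomp K pb_fst = vfcomp G (pb_snd HG).
Proof. symmetry. apply vfcomp_ff_lift. Qed.

Context {A : VCat V} (F : VFunctor A B) (H : VFunctor A C) (E : vfcomp K F = vfcomp G H).

Definition pb_pair : VFunctor A Pullback :=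
  @Build_VFunctor V A Pullback
    (fun a => exist _ (F a, H a) (f_equal (fun M => fobj M a) E)) (fhom F) (fcomp F) (funit F).

Lemma pb_fst_pair : vfcomp pb_fst pb_pair = F.
Proof. apply vfunctor_ext. intros x y. unfold fhom_arrow. simpl. rewrite cmp_idl. reflexivity. Qed.

Lemma pb_snd_pair (HG : fully_faithful G) : vfcomp (pb_snd HG) pb_pair = H.
Proof.
  apply vfunctor_ext. intros x y. unfold fhom_arrow. simpl.
  apply (ff_arrow_inj G HG); [reflexivity | reflexivity |].
  unfold ff_lift_hom. simpl.
  rewrite cmp_assoc, fhom_ff_inv, cmp_idr, <- cmp_assoc, arrow_vcast.
  exact (fhom_arrow_congr _ _ x y E).
Qed.

End CanonicalPullback.

Section CommutingSquare.
Context {V : SMCC} {A B C D : VCat V}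
  (F : VFunctor A B) (H : VFunctor A C) (K : VFunctor B D) (G : VFunctor C D).
Hypothesis E : vfcomp K F = vfcomp G H.
Hypothesis HG : fully_faithful G.

Lemma square_obj (a : A) : K (F a) = G (H a).
Proof. exact (f_equal (fun M => fobj M a) E). Qed.

Lemma square_arrow {S} (s : arrows A S) :
  map_arrow K (map_arrow F s) = map_arrow G (map_arrow H s).
Proof. rewrite <- !map_arrow_vfcomp, E. reflexivity. Qed.

Lemma square_ess_image (b : B) : ess_image F b -> ess_image G (K b).
Proof.
  intro Hb. apply (ess_image_vfcomp G H). rewrite <- E. exact (ess_image_map F K b Hb).
Qed.

Lemma pullback_jointly_monic (Hpb : is_pullback F H K G) {X : VCat V} (U1 U2 : VFunctor X A) :
  vfcomp F U1 = vfcomp F U2 -> vfcomp H U1 = vfcomp H U2 -> U1 = U2.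
Proof.
  intros EF EH.
  assert (Hsq : vfcomp K (vfcomp F U2) = vfcomp G (vfcomp H U2)) by (rewrite !vfcompA, E; reflexivity).
  destruct (Hpb X _ _ Hsq) as [U [_ Huniq]].
  rewrite <- (Huniq U1 (conj EF EH)). apply Huniq. auto.
Qed.

Lemma pullback_retraction (Hpb : is_pullback F H K G) :
  exists U : VFunctor (Pullback K G) A,
    vfcomp F U = pb_fst K G /\ vfcomp U (pb_pair K G F H E) = vfid A.
Proof.
  destruct (Hpb _ (pb_fst K G) (pb_snd K G HG) (pb_square K G HG)) as [U [[HU1 HU2] _]].
  exists U. split; [exact HU1 |].
  apply (pullback_jointly_monic Hpb).
  - rewrite vfcompA, HU1, pb_fst_pair, vfcomp_id. reflexivity.
  - rewrite vfcompA, HU2, pb_snd_pair, vfcomp_id. reflexivity.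
Qed.

Lemma pullback_ff (Hpb : is_pullback F H K G) : fully_faithful F.
Proof.
  destruct (pullback_retraction Hpb) as [U [HFU HUpair]].
  set (s := pb_pair K G F H E).
  intros x y.
  assert (Hleft : arrow (U (s x)) (U (s y)) (fhom U (s x) (s y) ⊙ fhom F x y) = arrow x y (idm _))
    by exact (fhom_arrow_congr _ _ x y HUpair).
  assert (Hright : arrow (F (U (s x))) (F (U (s y))) (fhom F _ _ ⊙ fhom U (s x) (s y))
                   = arrow (F x) (F y) (idm _))
    by exact (fhom_arrow_congr _ _ (s x) (s y) HFU).
  (* [U (s x)] is only propositionally equal to [x]. *)
  revert Hleft Hright. generalize (fhom U (s x) (s y)).
  generalize (U (s x)) (U (s y)). intros a b u Hleft Hright.
  destruct (arrow_endpoints Hleft) as [-> ->].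
  exists u. split; [exact (arrow_inj Hleft) | exact (arrow_inj Hright)].
Qed.

Lemma pullback_ess_image (HK : discrete_isofibration K) (Hpb : is_pullback F H K G) (b : B) :
  ess_image G (K b) -> ess_image F b.
Proof.
  intros [c [g Hg]].
  destruct (HK b (G c) g Hg) as [b' [f' [Hf' [Hlift _]]]].
  assert (eb : K b' = G c) by exact (f_equal (@projT1 _ _) Hlift).
  destruct (pullback_retraction Hpb) as [U [HFU _]].
  set (p := exist _ (b', c) eb : vobj (Pullback K G)).
  assert (eU : F (U p) = b') by exact (f_equal (fun M => fobj M p) HFU).
  exists (U p). rewrite eU. exists f'. exact Hf'.
Qed.

Lemma square_obj_unique (HH : discrete_isofibration H) (HF : fully_faithful F) (a1 a2 : A) :
  F a1 = F a2 -> H a1 = H a2 -> a1 = a2.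
Proof.
  intros eF eH.
  destruct (ff_arrow_full F HF a1 a2 _ _ (uid B (F a1)) eq_refl eF) as [phi Hphi].
  assert (Hphi_iso : is_uiso phi)
    by exact (ff_reflects_uiso F HF phi (arrow_is_uiso Hphi (uid_is_uiso B _))).
  (* [H phi] is an identity because [G (H phi) = K (F phi)] is one. *)
  assert (HHphi : arrow (H a1) (H a2) (ufmap H phi) = arrow (H a2) (H a2) (ufmap H (uid A a2))).
  { rewrite ufmap_uid. apply (ff_arrow_inj G HG); [exact eH | reflexivity |].
    change (map_arrow G (map_arrow H (arrow a1 a2 phi))
            = arrow (G (H a2)) (G (H a2)) (ufmap G (uid C (H a2)))).
    rewrite <- square_arrow, ufmap_uid.
    change (map_arrow K (arrow (F a1) (F a2) (fhom F a1 a2 ⊙ phi)) = arrow _ _ (uid D (G (H a2)))).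
    rewrite <- Hphi. simpl. change (fhom K (F a1) (F a1) ⊙ uid B (F a1)) with (ufmap K (uid B (F a1))).
    rewrite ufmap_uid. apply arrow_vunit. rewrite square_obj, eH. reflexivity. }
  exact (proj1 (arrow_endpoints
    (disc_isofib_lift_unique H HH a2 a1 a2 phi (uid A a2) Hphi_iso (uid_is_uiso A a2) HHphi))).
Qed.

Lemma square_obj_exists (HH : discrete_isofibration H) (HK : discrete_isofibration K)
  (b : B) (c : C) : K b = G c -> ess_image F b -> exists a, F a = b /\ H a = c.
Proof.
  intros ebc [a [f [f' [Hf'f Hff']]]].
  assert (Hf' : is_uiso f') by (exists f; auto).
  assert (HKf' : is_uiso (ufmap K f')) by exact (ufmap_is_uiso K f' Hf').
  destruct (ff_arrow_full G HG c (H a) _ _ (ufmap K f') ebc (square_obj a)) as [h Hh].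
  assert (Hh_iso : is_uiso h) by exact (ff_reflects_uiso G HG h (arrow_is_uiso Hh HKf')).
  destruct (HH a c h Hh_iso) as [a' [phi [Hphi [Hlift _]]]].
  apply slice_eq_arrow in Hlift.
  exists a'. split; [| exact (proj1 (arrow_endpoints Hlift))].
  assert (HKlift : arrow (K b) (K (F a)) (ufmap K f')
                   = arrow (K (F a')) (K (F a)) (ufmap K (ufmap F phi))).
  { rewrite Hh. transitivity (map_arrow G (map_arrow H (arrow a' a phi))).
    - symmetry. exact (f_equal (map_arrow G) Hlift).
    - rewrite <- square_arrow. reflexivity. }
  symmetry. exact (proj1 (arrow_endpoints (disc_isofib_lift_unique K HK (F a) b (F a')
    f' (ufmap F phi) Hf' (ufmap_is_uiso F phi Hphi) HKlift))).
Qed.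

Lemma pullback_of_ff_ess_image (HH : discrete_isofibration H) (HK : discrete_isofibration K)
  (HF : fully_faithful F) (Hess : forall b, ess_image G (K b) -> ess_image F b) :
  is_pullback F H K G.
Proof.
  intros X P Q EPQ.
  assert (Hobj : forall x : X, {a : A | F a = P x /\ H a = Q x}).
  { intro x. apply constructive_indefinite_description.
    assert (ex : K (P x) = G (Q x)) by exact (f_equal (fun M => fobj M x) EPQ).
    apply (square_obj_exists HH HK _ _ ex), Hess. rewrite ex. apply ess_image_obj. }
  set (L := ff_lift F HF P (fun x => proj1_sig (Hobj x))
              (fun x => eq_sym (proj1 (proj2_sig (Hobj x))))).
  assert (HFL : vfcomp F L = P) by apply vfcomp_ff_lift.
  assert (HL : forall x, H (L x) = Q x) by (intro x; exact (proj2 (proj2_sig (Hobj x)))).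
  exists L. split; [split; [exact HFL |] |].
  - apply vfunctor_ext. intros x y. apply (ff_arrow_inj G HG); [apply HL | apply HL |].
    change (map_arrow G (map_arrow H (fhom_arrow L x y)) = fhom_arrow (vfcomp G Q) x y).
    rewrite <- square_arrow, <- EPQ.
    exact (f_equal (map_arrow K) (fhom_arrow_congr _ _ x y HFL)).
  - intros U [HFU HHU].
    assert (HLU : forall x, L x = U x).
    { intro x. apply (square_obj_unique HH HF).
      - exact (f_equal (fun M => fobj M x) (eq_trans HFL (eq_sym HFU))).
      - rewrite HL. exact (f_equal (fun M => fobj M x) (eq_sym HHU)). }
    apply vfunctor_ext. intros x y. apply (ff_arrow_inj F HF); [apply HLU | apply HLU |].
    exact (fhom_arrow_congr _ _ x y (eq_trans HFL (eq_sym HFU))).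
Qed.

End CommutingSquare.

Theorem lemma4p1 (V : SMCC) (A B C D : VCat V)
  (F : VFunctor A B) (H : VFunctor A C) (K : VFunctor B D) (G : VFunctor C D) :
  vfcomp K F = vfcomp G H ->
  fully_faithful G ->
  discrete_isofibration H ->
  discrete_isofibration K ->
  (is_pullback F H K G <->
   (fully_faithful F /\ (forall b : B, ess_image F b <-> ess_image G (K b)))).
Proof.
  intros E HG HH HK. split.
  - intro Hpb. split; [exact (pullback_ff F H K G E HG Hpb) |].
    intro b. split.
    + exact (square_ess_image F H K G E b).
    + exact (pullback_ess_image F H K G E HG HK Hpb b).
  - intros [HF Hess].
    apply (pullback_of_ff_ess_image F H K G E HG HH HK HF).
    intro b. apply Hess.
Qed.
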